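(* Let $E$ and $F$ be complex Banach spaces, let $A_m:\mathrm{dom}(A_m)\subseteq E\to E$ and $B:\mathrm{dom}(B)\subseteq F\to F$ be linear operators, and let $L:\mathrm{dom}(A_m)\to F$ be linear, surjective and bounded with respect to the graph norm of $A_m$. Assume that the restriction $A_0$ of $A_m$ to $\ker(L)$ generates a strongly continuous semigroup $(T_0(t))_{t\ge0}$ on $E$, that $B$ generates a strongly continuous semigroup $(S(t))_{t\ge0}$ on $F$, that $x\mapsto(A_mx,Lx)$, $\mathrm{dom}(A_m)\to E\times F$, is closed, and that $A_0$ and $B$ are boundedly invertible. Let $D_0:=(L|_{\ker(A_m)})^{-1}:F\to E$. For $y\in\mathrm{dom}(B)$ and $t\ge0$ let $Q(t)y=D_0S(t)y-T_0(t)D_0y-\int_0^tT_0(t-s)D_0S(s)By\,\mathrm{d}s$, and assume that each $Q(t)$ extends to a bounded operator $F\to E$ with $\limsup_{t\downarrow0}\|Q(t)\|<\infty$; let $(\mathcal{T}(t))_{t\ge0}$ be the $C_0$-semigroup on $E\times F$ given by $\mathcal{T}(t)=\begin{pmatrix}T_0(t)&Q(t)\\0&S(t)\end{pmatrix}$. For each $\tau>0$ let $V(\tau):\mathrm{dom}(B)\to E$ be a linear operator, put $\mathbb{T}(\tau)=\begin{pmatrix}T_0(\tau)&V(\tau)\\0&S(\tau)\end{pmatrix}$ acting on $E\times\mathrm{dom}(B)$, and let $V_k(\tau)=\sum_{j=0}^{k-1}T_0((k-1-j)\tau)V(\tau)S(j\tau)$ for $k\in\mathbb{N}$. Let $\mathcal{R}_0=\begin{pmatrix}I&-D_0\\0&I\end{pmatrix}$.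 Let $y\in\mathrm{dom}(B)$ and suppose that \[ \lim_{n\to\infty}V_n(\tfrac tn)y=-\int_0^tT_0(t-s)D_0S(s)By\,\mathrm{d}s \] uniformly for $t$ in compact subsets of $[0,\infty)$. Then for every $x\in E$ and every $t_{\max}>0$, \[ \lim_{n\to\infty}\mathcal{R}_0^{-1}\mathbb{T}(\tfrac tn)^n\mathcal{R}_0\binom{x}{y}=\mathcal{T}(t)\binom{x}{y} \] uniformly for $t\in[0,t_{\max}]$.
   Context: Under the stated assumptions $D_0$ is bounded, and the semigroup $(\mathcal{T}(t))_{t\ge0}$ is the one generated by the operator $\mathrm{diag}(A_m,B)$ on $E\times F$ with domain $\{(x,y)\in\mathrm{dom}(A_m)\times\mathrm{dom}(B):Lx=y\}$. Here $\mathcal{R}_0^{-1}=\begin{pmatrix}I&D_0\\0&I\end{pmatrix}$. *)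

From HB Require Import structures.
From mathcomp Require Import all_boot all_order all_algebra.
From mathcomp Require Import all_classical all_reals all_analysis.
From mathcomp.real_closed Require Import complex.
Set Implicit Arguments. Unset Strict Implicit. Unset Printing Implicit Defensive.
Import Order.TTheory GRing.Theory Num.Theory.
Import numFieldNormedType.Exports.
Local Open Scope classical_set_scope.
Local Open Scope ring_scope.
Local Open Scope complex_scope.

Section Defs.
Variable R : realType.
Local Notation C := R[i].

Definition lin_subspace (U : lmodType C) (D : set U) : Prop :=
  D 0 /\ forall (a : C) x y, D x -> D y -> D (a *: x + y).

Definition linear_on (U W : lmodType C) (D : set U) (f : U -> W) : Prop :=
  forall (a : C) x y, D x -> D y -> f (a *: x + y) = a *: f x + f y.

Definition bounded_op (U W : normedModType C) (f : U -> W) : Prop :=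
  linear_on setT f /\ exists c : R, forall x, `|f x| <= c%:C * `|x|.

Definition C0_semigroup (E : normedModType C) (T : R -> E -> E) : Prop :=
  [/\ forall t, 0 <= t -> bounded_op (T t),
      forall x, T 0 x = x,
      forall s t x, 0 <= s -> 0 <= t -> T (s + t) x = T s (T t x) &
      forall x, T t x @[t --> 0^'+] --> x].

Definition generates (E : normedModType C) (D : set E) (A : E -> E)
  (T : R -> E -> E) : Prop :=
  C0_semigroup T /\
  forall x v, (D x /\ A x = v) <->
     ((h^-1)%:C *: (T h x - x) @[h --> 0^'+] --> v).

Definition boundedly_invertible (E : normedModType C) (D : set E)
  (A : E -> E) : Prop :=
  exists Ainv : E -> E, [/\ bounded_op Ainv,
     forall z, D (Ainv z) /\ A (Ainv z) = z &
     forall x, D x -> Ainv (A x) = x].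

Definition is_RiemannInt (E : normedModType C) (f : R -> E) (a b : R)
  (v : E) : Prop :=
  forall eps : R, 0 < eps -> exists2 delta : R, 0 < delta &
    forall (n : nat) (p xi : nat -> R),
      p 0%N = a -> p n = b ->
      (forall i, (i < n)%N -> p i <= xi i <= p i.+1 /\ p i.+1 - p i < delta) ->
      `|\sum_(i < n) ((p i.+1 - p i)%:C *: f (xi i)) - v| < eps%:C.

Definition Vk (E F : lmodType C) (T0 : R -> E -> E) (V : R -> F -> E)
  (S : R -> F -> F) (k : nat) (tau : R) (y : F) : E :=
  \sum_(j < k) T0 ((k - 1 - j)%:R * tau) (V tau (S (j%:R * tau) y)).

Definition TTmat (E F : lmodType C) (T0 : R -> E -> E) (V : R -> F -> E)
  (S : R -> F -> F) (tau : R) (p : E * F) : E * F :=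
  (T0 tau p.1 + V tau p.2, S tau p.2).

Definition R0 (E F : lmodType C) (D0 : F -> E) (p : E * F) : E * F :=
  (p.1 - D0 p.2, p.2).
Definition R0inv (E F : lmodType C) (D0 : F -> E) (p : E * F) : E * F :=
  (p.1 + D0 p.2, p.2).

Definition calT (E F : lmodType C) (T0 : R -> E -> E) (Q : R -> F -> E)
  (S : R -> F -> F) (t : R) (p : E * F) : E * F :=
  (T0 t p.1 + Q t p.2, S t p.2).

End Defs.

From HB Require Import structures.
From mathcomp Require Import all_boot all_order all_algebra.
From mathcomp Require Import all_classical all_reals all_analysis.
From mathcomp.real_closed Require Import complex.
From mathcomp Require Import zify.

Set Implicit Arguments.
Unset Strict Implicit.
Unset Printing Implicit Defensive.
Import Order.TTheory GRing.Theory Num.Theory.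
Import numFieldNormedType.Exports.
Local Open Scope classical_set_scope.
Local Open Scope ring_scope.
Local Open Scope complex_scope.

(* The statement is purely algebraic once the Riemann integral in the
   hypothesis on [Q] is identified with the one in the hypothesis on [V_n].
   Starting from [R0 (x, y) = (x - D0 y, y)], the n-th power of [TT(t/n)] is
   [(T0 t (x - D0 y) + V_n(t/n) y, S t y)], and [R0inv] adds back [D0 (S t y)].
   Since [Q t y = D0 (S t y) - T0 t (D0 y) - I t], the first components of
   the two sides differ by exactly [V_n(t/n) y + I t] and the second ones
   agree, so the assumed uniform convergence is the conclusion. *)

Section LinearOnSetT.
Variables (R : realType) (U W : lmodType R[i]) (f : U -> W).
Hypothesis f_lin : linear_on setT f.

Lemma linear_onT0 : f 0 = 0.
Proof.
have := @f_lin 1 0 0 I I; rewrite !scale1r addr0 => f0.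
by apply: (addrI (f 0)); rewrite addr0 -f0.
Qed.

Lemma linear_onTD u v : f (u + v) = f u + f v.
Proof. by rewrite -[u]scale1r f_lin // !scale1r. Qed.

Lemma linear_onTB u v : f (u - v) = f u - f v.
Proof. by rewrite addrC -scaleN1r f_lin // scaleN1r addrC. Qed.

Lemma linear_onT_sum k (G : 'I_k -> U) :
  f (\sum_(j < k) G j) = \sum_(j < k) f (G j).
Proof. exact: (big_morph f linear_onTD linear_onT0). Qed.

End LinearOnSetT.

Lemma mulr_natSl (Rg : pzSemiRingType) k (x : Rg) :
  k.+1%:R * x = x + k%:R * x.
Proof. by rewrite !mulr_natl mulrS. Qed.

Section RiemannIntUnique.
Variable R : realType.

Lemma norm_lt_all_eq0 (E : normedModType R[i]) (w : E) :
  (forall eps : R, 0 < eps -> `|w| < eps%:C) -> w = 0.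
Proof.
move=> small; apply/eqP/negPn/negP => w_neq0.
have w_real : `|w| \is Num.real by apply: normr_real.
have Re_pos : 0 < complex.Re `|w| by rewrite -ltcR RRe_real // normr_gt0.
by have := small _ Re_pos; rewrite RRe_real // ltxx.
Qed.

Lemma uniform_partition (a b d : R) : a <= b -> 0 < d ->
  exists m (p : nat -> R), [/\ p 0%N = a, p m = b &
    forall i, (i < m)%N -> p i <= p i <= p i.+1 /\ p i.+1 - p i < d].
Proof.
move=> le_ab d_gt0; have ba_ge0 : 0 <= b - a by rewrite subr_ge0.
pose m := (Num.bound ((b - a) / d)).+1.
have m_neq0 : (m%:R : R) != 0 by rewrite pnatr_eq0.
have lt_m : (b - a) / d < m%:R.
  apply: (lt_le_trans (archi_boundP _)); first by rewrite divr_ge0 // ltW.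
  by rewrite ler_nat.
exists m, (fun i => a + i%:R * ((b - a) / m%:R)).
have step i : a + i.+1%:R * ((b - a) / m%:R) - (a + i%:R * ((b - a) / m%:R))
    = (b - a) / m%:R.
  by rewrite mulr_natSl addrCA addrK.
split; first by rewrite mul0r addr0.
  by rewrite mulrC divfK // addrC subrK.
move=> i _; rewrite lexx step; split.
  by rewrite -subr_ge0 step divr_ge0.
by rewrite ltr_pdivrMr ?ltr0n // mulrC -ltr_pdivrMr.
Qed.

Lemma is_RiemannInt_unique (E : normedModType R[i]) (f : R -> E) a b v1 v2 :
  a <= b -> is_RiemannInt f a b v1 -> is_RiemannInt f a b v2 -> v1 = v2.
Proof.
move=> le_ab int1 int2; apply/subr0_eq/norm_lt_all_eq0 => eps eps_gt0.
have eps2_gt0 : 0 < eps / 2 by rewrite divr_gt0.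
have [d1 d1_gt0 sum1] := int1 _ eps2_gt0.
have [d2 d2_gt0 sum2] := int2 _ eps2_gt0.
have [|m [p [p0 pm mesh]]] := @uniform_partition a b (Num.min d1 d2) le_ab.
  by rewrite lt_min d1_gt0 d2_gt0.
have mesh_le (d : R) : Num.min d1 d2 <= d ->
    forall i, (i < m)%N -> p i <= p i <= p i.+1 /\ p i.+1 - p i < d.
  by move=> le_d i /mesh [-> lt_min]; split=> //; exact: lt_le_trans le_d.
have := sum1 m p p p0 pm (mesh_le d1 ltac:(by rewrite ge_min lexx)).
have := sum2 m p p p0 pm (mesh_le d2 ltac:(by rewrite ge_min lexx orbT)).
set s := \sum_(i < m) _ => near2 near1.
rewrite -(subrKA s) (le_lt_trans (ler_normD _ _)) // distrC.
by rewrite [eps]splitr raddfD /= ltrD.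
Qed.

End RiemannIntUnique.

Section MatrixSemigroupPower.
Variables (R : realType) (E F : lmodType R[i]).
Variables (T0 : R -> E -> E) (V : R -> F -> E) (S : R -> F -> F).
Hypothesis T0_lin : forall t, 0 <= t -> linear_on setT (T0 t).
Hypothesis T0_0 : forall x, T0 0 x = x.
Hypothesis T0_add : forall s t x, 0 <= s -> 0 <= t ->
  T0 (s + t) x = T0 s (T0 t x).
Hypothesis S_0 : forall y, S 0 y = y.
Hypothesis S_add : forall s t y, 0 <= s -> 0 <= t ->
  S (s + t) y = S s (S t y).

Lemma VkS k tau y : 0 <= tau ->
  Vk T0 V S k.+1 tau y =
  T0 tau (Vk T0 V S k tau y) + V tau (S (k%:R * tau) y).
Proof.
move=> tau_ge0; rewrite /Vk big_ord_recr /= (linear_onT_sum (T0_lin tau_ge0)).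
rewrite subSS subn0 subnn mul0r T0_0; congr (_ + _); apply: eq_bigr => j _.
have -> : (k - j = (k - 1 - j).+1)%N by have := ltn_ord j; lia.
by rewrite mulr_natSl T0_add ?mulr_ge0 ?ler0n.
Qed.

Lemma iter_TTmat tau u y k : 0 <= tau ->
  iter k (TTmat T0 V S tau) (u, y) =
  (T0 (k%:R * tau) u + Vk T0 V S k tau y, S (k%:R * tau) y).
Proof.
move=> tau_ge0; elim: k => [|k IHk].
  by rewrite /= /Vk big_ord0 mul0r T0_0 S_0 addr0.
have ktau_ge0 : 0 <= k%:R * tau by rewrite mulr_ge0 ?ler0n.
rewrite iterS IHk /TTmat /= mulr_natSl -S_add // T0_add //.
by rewrite (linear_onTD (T0_lin tau_ge0)) VkS // addrA.
Qed.

Lemma R0inv_iter_TTmat_R0 (D0 : F -> E) (Q : R -> F -> E) (I : E) n t x y :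
  (0 < n)%N -> 0 <= t -> D0 (S t y) - T0 t (D0 y) - Q t y = I ->
  let p := R0inv D0 (iter n (TTmat T0 V S (t / n%:R)) (R0 D0 (x, y))) in
  let q := calT T0 Q S t (x, y) in
  p.1 - q.1 = Vk T0 V S n (t / n%:R) y + I /\ p.2 = q.2.
Proof.
move=> n_gt0 t_ge0 <- /=.
have n_neq0 : (n%:R : R) != 0 by rewrite pnatr_eq0 -lt0n.
rewrite iter_TTmat ?divr_ge0 // mulrC divfK //=.
rewrite (linear_onTB (T0_lin t_ge0)) opprD !addrA; split=> //; congr (_ - _).
by rewrite [LHS]addrC -!addrA addKr addrC addrA.
Qed.

End MatrixSemigroupPower.

Theorem proposition3p4 (R : realType)
  (E F : completeNormedModType R[i])
  (domAm : set E) (Am : E -> E) (domB : set F) (B : F -> F) (L : E -> F)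
  (T0 : R -> E -> E) (S : R -> F -> F) (D0 : F -> E) (Q : R -> F -> E)
  (V : R -> F -> E) :
  (* A_m, B linear operators; L linear, surjective, graph-norm bounded *)
  lin_subspace domAm -> linear_on domAm Am ->
  lin_subspace domB -> linear_on domB B ->
  linear_on domAm L ->
  (forall y, exists2 x, domAm x & L x = y) ->
  (exists c : R, forall x, domAm x -> `|L x| <= c%:C * (`|x| + `|Am x|)) ->
  (* A_0 := A_m restricted to ker L generates T0; B generates S *)
  generates [set x | domAm x /\ L x = 0] Am T0 ->
  generates domB B S ->
  (* x |-> (A_m x, L x) is closed *)
  closed [set p : E * (E * F) | exists2 x, domAm x & p = (x, (Am x, L x))] ->
  (* A_0 and B boundedly invertible *)
  boundedly_invertible [set x | domAm x /\ L x = 0] Am ->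
  boundedly_invertible domB B ->
  (* D0 = (L restricted to ker A_m)^{-1} *)
  (forall y, [/\ domAm (D0 y), Am (D0 y) = 0 & L (D0 y) = y]) ->
  (* Q(t) y = D0 S(t) y - T0(t) D0 y - int_0^t T0(t-s) D0 S(s) B y ds on dom B *)
  (forall t y, 0 <= t -> domB y ->
     is_RiemannInt (fun s => T0 (t - s) (D0 (S s (B y)))) 0 t
       (D0 (S t y) - T0 t (D0 y) - Q t y)) ->
  (* each Q(t) is (extends to) a bounded operator F -> E *)
  (forall t, 0 <= t -> bounded_op (Q t)) ->
  (* limsup_{t -> 0+} ||Q(t)|| < oo *)
  (exists M delta : R, 0 < delta /\
     forall t y, 0 < t < delta -> `|Q t y| <= M%:C * `|y|) ->
  (* V(tau) : dom(B) -> E linear, tau > 0 *)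
  (forall tau, 0 < tau -> linear_on domB (V tau)) ->
  forall y, domB y ->
  (* V_n(t/n) y -> - int_0^t T0(t-s) D0 S(s) B y ds, uniformly on compacts *)
  (exists I : R -> E,
     (forall t, 0 <= t ->
        is_RiemannInt (fun s => T0 (t - s) (D0 (S s (B y)))) 0 t (I t)) /\
     (forall K : set R, compact K -> K `<=` [set t | 0 <= t] ->
        forall eps : R, 0 < eps -> exists N : nat, forall n : nat, (N <= n)%N ->
          forall t, K t -> `|Vk T0 V S n (t / n%:R) y + I t| < eps%:C)) ->
  (* conclusion *)
  forall (x : E) (tmax : R), 0 < tmax ->
  forall eps : R, 0 < eps -> exists N : nat, forall n : nat, (N <= n)%N ->
    forall t, 0 <= t <= tmax ->
      let p := R0inv D0 (iter n (TTmat T0 V S (t / n%:R)) (R0 D0 (x, y))) in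
      let q := calT T0 Q S t (x, y) in
      `|p.1 - q.1| < eps%:C /\ `|p.2 - q.2| < eps%:C.
Proof.
move=> _ _ _ _ _ _ _ [[T0_bnd T0_0 T0_add _] _] [[_ S_0 S_add _] _] _ _ _ _.
move=> Q_int _ _ _ y y_domB [I [I_int V_cvg]] x tmax _ eps eps_gt0.
have T0_lin t : 0 <= t -> linear_on setT (T0 t) by move=> /T0_bnd [].
have seg_ge0 : `[0, tmax] `<=` [set t | 0 <= t].
  by move=> s; rewrite /= in_itv /= => /andP[].
have [N V_near] := V_cvg _ (@segment_compact _ 0 tmax) seg_ge0 eps eps_gt0.
exists (maxn N 1) => n; rewrite geq_max => /andP[le_Nn n_gt0] t.
move=> /andP[t_ge0 le_t_tmax]; cbv zeta.
have Q_I := is_RiemannInt_unique t_ge0 (Q_int t y t_ge0 y_domB) (I_int t t_ge0).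
have [-> ->] := R0inv_iter_TTmat_R0 V T0_lin T0_0 T0_add S_0 S_add x n_gt0 t_ge0 Q_I.
split; first by apply: V_near; rewrite //= in_itv /= t_ge0 le_t_tmax.
by rewrite subrr normr0 ltcE /= eqxx eps_gt0.
Qed.
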